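(* Let $S$ be any set of $\omega$-sharing groups and let $\{x_1/t_1\}\cup\theta$ be an idempotent substitution, where $\theta$ is an idempotent substitution with $x_1\notin\mathrm{dom}(\theta)$. Then \[ \mathrm{mgu_p}(S,\{x_1/t_1\}\cup\theta)=\mathrm{mgu_p}\bigl(\mathrm{mgu_p}(S,\{x_1/t_1\}),\theta\bigr). \]
   Context: Fix a first-order signature and a denumerable set of variables $\mathcal V$. For a term $t$ and variable $v$, $\mathit{occ}(v,t)$ is the number of occurrences of $v$ in $t$. An $\omega$-sharing group is a multiset of variables with finite support, i.e. a function $B:\mathcal V\to\mathbb N$ that is nonzero on only finitely many variables; $\{\!\!\{\}\!\!\}$ is the empty multiset, and the sum of multisets is $(A\uplus B)(v)=A(v)+B(v)$. The multiplicity of an $\omega$-sharing group $B$ in a term $t$ is $\chi(B,t)=\sum_{v} B(v)\cdot\mathit{occ}(v,t)$. A multigraph $G=\langle N_G,E_G,\mathrm{src}_G,\mathrm{tgt}_G\rangle$ consists of a nonempty set of nodes $N_G$, a set of edges $E_G$, and functions $\mathrm{src}_G,\mathrm{tgt}_G:E_G\to N_G$ (multiple distinct edges, including self-loops, may join the same nodes). The out-degree (in-degree) of $n$ is the number of edges $e$ with $\mathrm{src}_G(e)=n$ (resp. $\mathrm{tgt}_G(e)=n$). A path between $n_1$ and $n_k$ is a nonempty sequence of nodes $n_1\dots n_k$ such that consecutive nodes are joined by an edge in either direction; $G$ is connected if every pair of nodes is joined by a path. A (parallel) sharing graph for a set $S$ of $\omega$-sharing groups and an idempotent substitution $\theta=\{x_1/t_1,\dots,x_p/t_p\}$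 (with $p\ge 0$) is a family $\mathcal G=\{G^i\}_{i\in[1,p]}$ of multigraphs over a common node set $N_{\mathcal G}$, with a labeling $l_{\mathcal G}:N_{\mathcal G}\to S$, such that: (i) for every node $n$ and every $i$, the out-degree of $n$ in $G^i$ equals $\chi(l_{\mathcal G}(n),x_i)$ and the in-degree of $n$ in $G^i$ equals $\chi(l_{\mathcal G}(n),t_i)$; (ii) the edge sets $E_{G^i}$ are pairwise disjoint; (iii) the flattening of $\mathcal G$, i.e. the multigraph with nodes $N_{\mathcal G}$, edges $\bigcup_i E_{G^i}$ and source/target inherited from the layers, is connected. The resultant $\omega$-sharing group is $\mathit{res}(\mathcal G)=\biguplus_{n\in N_{\mathcal G}} l_{\mathcal G}(n)$. The parallel abstract unification is $\mathrm{mgu_p}(S,\theta)=\{\mathit{res}(\mathcal G)\mid \mathcal G \text{ a sharing graph for } S \text{ and } \theta\}$. (When $\theta=\epsilon$ is empty, $p=0$ and $\mathrm{mgu_p}(S,\epsilon)=S$.) *)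

From mathcomp Require Import all_boot.
Set Implicit Arguments. Unset Strict Implicit. Unset Printing Implicit Defensive.

Inductive term (F : Type) : Type :=
| Var of nat
| Fun of F & seq (term F).
Arguments Var {F} _.

Section Terms.
Variable F : Type.

Fixpoint wf_term (ar : F -> nat) (t : term F) : bool :=
  match t with
  | Var _ => true
  | Fun f ts => (size ts == ar f) && all (wf_term ar) ts
  end.

Fixpoint occ (v : nat) (t : term F) : nat :=
  match t with
  | Var w => (w == v) : nat
  | Fun _ ts => sumn (map (occ v) ts)
  end.

Fixpoint vars (t : term F) : seq nat :=
  match t with
  | Var w => [:: w]
  | Fun _ ts => flatten (map vars ts)
  end.
End Terms.

(* omega-sharing groups: multisets of variables, i.e. functions V -> nat
   with finite support. *)
Definition osg := nat -> nat.
Definition fin_supp (B : osg) : Prop := exists N, forall v, N <= v -> B v = 0.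

(* chi(B,t) = sum_v B(v) * occ(v,t); the sum is over the (finitely many)
   variables of t, since occ(v,t) = 0 for all other v. *)
Definition chi (F : Type) (B : osg) (t : term F) : nat :=
  \sum_(v <- undup (vars t)) B v * occ v t.

(* A substitution {x1/t1,...,xp/tp} as the list of its bindings (x_i, t_i). *)
Definition subst (F : Type) := seq (nat * term F).
Definition dom (F : Type) (s : subst F) : seq nat := map fst s.

Definition idem_subst (F : Type) (s : subst F) : Prop :=
  uniq (dom s) /\
  forall x, x \in dom s -> all (fun t => occ x t == 0) (map snd s).

Definition wf_subst (F : Type) (ar : F -> nat) (s : subst F) : Prop :=
  all (wf_term ar) (map snd s).

(* A parallel sharing graph for a substitution with p = size s bindings:
   a common finite node set, and a family of p multigraphs given as one
   finite type of edges partitioned into layers (layer e = i means that e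
   is an edge of G^i); thus the edge sets of distinct layers are disjoint
   and the flattening has all edges. *)
Record pgraph (p : nat) := PGraph {
  node : finType;
  edge : finType;
  layer : edge -> 'I_p;
  src : edge -> node;
  tgt : edge -> node;
  lab : node -> osg
}.

Section SharingGraph.
Variable F : Type.

Definition outdeg p (G : pgraph p) (i : 'I_p) (n : node G) : nat :=
  #|[set e : edge G | (layer e == i) && (src e == n)]|.
Definition indeg p (G : pgraph p) (i : 'I_p) (n : node G) : nat :=
  #|[set e : edge G | (layer e == i) && (tgt e == n)]|.

Definition adj p (G : pgraph p) : rel (node G) :=
  fun n m => [exists e : edge G,
     ((src e == n) && (tgt e == m)) || ((src e == m) && (tgt e == n))].

Definition connected p (G : pgraph p) : Prop :=
  forall n m : node G, exists l : seq (node G),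
    path (@adj p G) n l /\ last n l = m.

Definition is_sharing_graph (S : osg -> Prop) (s : subst F)
    (G : pgraph (size s)) : Prop :=
  [/\ exists n : node G, True,
      forall n : node G, S (lab n),
      forall (i : 'I_(size s)) (n : node G),
        outdeg i n = chi (lab n) (@Var F (nth (0, Var 0) s i).1) /\
        indeg i n = chi (lab n) (nth (0, Var 0) s i).2
    & connected G].

Definition res p (G : pgraph p) : osg := fun v => \sum_(n : node G) lab n v.

Definition mgu_p (S : osg -> Prop) (s : subst F) : osg -> Prop :=
  fun B => exists G : pgraph (size s), is_sharing_graph S G /\ res G = B.
End SharingGraph.

From mathcomp Require Import all_boot.
From Stdlib Require Import FunctionalExtensionality.
Set Implicit Arguments. Unset Strict Implicit. Unset Printing Implicit Defensive.

(* Composition of parallel abstract unification: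
     mgu_p(S, b :: θ) = mgu_p(mgu_p(S, [b]), θ)
   for every set S, every binding b and every substitution θ.  A sharing graph for b :: θ is layered, layer 0 belonging to b.
   (⊆) Contraction.  The connected components of the layer-0 edges of a
   sharing graph G for S and b :: θ are sharing graphs for S and [b]
   (comp_graph).  Collapsing each component to one node labelled with its
   resultant gives a sharing graph for mgu_p(S, [b]) and θ (contraction) with
   the same resultant: chi is additive in the group, and connectivity passes
   to the quotient.
   (⊇) Expansion.  Given a sharing graph G for mgu_p(S, [b]) and θ, replace
   every node n by a sharing graph H n for S and [b] with resultant lab n, and
   reattach the edges of G leaving (entering) n in layer i to nodes k of H n,
   exactly chi(lab k, x_i) (resp. chi(lab k, t_i)) of them to k.  Such a
   distribution exists because the totals agree by additivity of chi
   (exists_fibration); the result (expansion) is a sharing graph for S and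
   b :: θ with the same resultant. *)

Lemma chi_sum (F : Type) (I : finType) (P : pred I) (f : I -> osg) (t : term F) :
  chi (fun v => \sum_(i | P i) f i v) t = \sum_(i | P i) chi (f i) t.
Proof.
rewrite /chi; under eq_bigr do rewrite big_distrl; exact: exchange_big.
Qed.

Lemma connectedP p (G : pgraph p) :
  connected G <-> forall n m, connect (@adj p G) n m.
Proof.
split=> [conG n m|conG n m].
  by have [l [pl lm]] := conG n m; apply/connectP; exists l.
by have /connectP[l pl lm] := conG n m; exists l.
Qed.

Lemma connect_homo (T U : finType) (e1 : rel T) (e2 : rel U) (h : T -> U) x y :
  (forall a b, e1 a b -> e2 (h a) (h b)) -> connect e1 x y -> connect e2 (h x) (h y).
Proof.
move=> homo_h /connectP[l pl ->]; elim: l x pl => //= z l IH x /andP[exz /IH].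
by apply: connect_trans; apply: connect1; apply: homo_h.
Qed.

Lemma Tagged_eqE (I : eqType) (J : I -> eqType) (a n : I)
    (Fa : forall i, J i) (y : J n) :
  (Tagged J (Fa a) == Tagged J y) = (a == n) && (Fa n == y).
Proof.
case: (eqVneq a n) => [->|ne]; first by rewrite eq_Tagged.
by apply/eqP => /(congr1 tag) /= E; rewrite E eqxx in ne.
Qed.

Lemma Tagged_neq (I : eqType) (J : I -> eqType) (a n : I) (x : J a) (y : J n) :
  a != n -> (Tagged J x == Tagged J y) = false.
Proof. by move=> ne; apply/eqP => /(congr1 tag) /= E; rewrite E eqxx in ne. Qed.

Lemma sum_sigT (I : finType) (J : I -> finType) (F : {i : I & J i} -> nat) :
  \sum_(a : {i : I & J i}) F a = \sum_i \sum_(j : J i) F (Tagged J j).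
Proof.
rewrite (sig_big_dep xpredT (fun _ _ => true) (fun i j => F (Tagged J j))) /=.
by apply: eq_bigr => -[i j].
Qed.

Lemma sum_sig_cond (T : finType) (Q P : pred T) (F : T -> nat) :
  \sum_(x : {x | Q x} | P (val x)) F (val x) = \sum_(x | Q x && P x) F x.
Proof. by rewrite (big_sub_cond Q P F). Qed.

(* A finite set whose size is the total of prescribed counts d k can be
   mapped onto K with fibres of exactly these sizes; this is how the edges
   at a node are distributed among the nodes replacing it. *)
Lemma exists_fibration (T K : finType) (P : pred T) (d : K -> nat) (k0 : K) :
  \sum_(x | P x) 1 = \sum_k d k ->
  exists f : T -> K, forall k, \sum_(x | P x && (f x == k)) 1 = d k.
Proof.
move Hn: (\sum_k d k) => n; elim: n P d Hn => [|n IH] P d sum_d sum_P.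
  exists (fun _ => k0) => k.
  have /eqP := sum_d; rewrite sum_nat_eq0 => /forallP /(_ k) /implyP /(_ isT) /eqP ->.
  apply: big_pred0 => x; apply/negbTE/negP => /andP [Px _].
  by move: sum_P; rewrite (bigD1 x).
have [k1 dk1] : exists k1, 0 < d k1.
  case: (pickP (fun k => 0 < d k)) => [k1 dk1|d0]; first by exists k1.
  by move: sum_d; rewrite big1 // => k _; move: (d0 k) => /= /negbT; rewrite lt0n negbK => /eqP.
have [x1 Px1] : exists x1, P x1.
  case: (pickP P) => [x1 Px1|P0]; first by exists x1.
  by move: sum_P; rewrite big_pred0.
pose P' := [pred x | P x && (x != x1)].
pose d' k := if k == k1 then (d k).-1 else d k.
have sum_P' : \sum_(x | P' x) 1 = n.
  by move: sum_P; rewrite (bigD1 x1) //= add1n => -[].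
have sum_d' : \sum_k d' k = n.
  rewrite (bigD1 k1) //= {1}/d' eqxx.
  rewrite (eq_bigr (fun k => d k)); last by move=> k /negbTE ne; rewrite /d' ne.
  by move: sum_d; rewrite (bigD1 k1) //= -{1}(prednK dk1) addSn => -[].
have [f' fibre_f'] := IH P' d' sum_d' sum_P'.
exists (fun x => if x == x1 then k1 else f' x) => k.
have fibre_k := fibre_f' k.
rewrite (big_mkcond (fun x => P' x && _)) (bigD1 x1) //= eqxx andbF add0n in fibre_k.
rewrite (big_mkcond (fun x => P x && _)) (bigD1 x1) //= eqxx Px1 /=.
rewrite (eq_bigr (fun x => if P' x && (f' x == k) then 1 else 0)); last first.
  by move=> x /negbTE ne; rewrite /P' /= ne andbT.
rewrite fibre_k /d'; case: (eqVneq k k1) => [->|//].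
by rewrite add1n prednK.
Qed.

(* The expansion of G: every node n of G is replaced by the graph H n; layer 0
   consists of the edges of all the H n, and an edge e of G in layer i becomes
   an edge of layer i+1 from the node f (i, src e) e of H (src e) to the node
   g (i, tgt e) e of H (tgt e). *)
Section Expansion.
Variables (p : nat) (G : pgraph p) (H : node G -> pgraph 1).
Variables f g : forall x : 'I_p * node G, edge G -> node (H x.2).

Definition expansion : pgraph p.+1 :=
  @PGraph p.+1 {n : node G & node (H n)} ({n : node G & edge (H n)} + edge G)%type
    (fun e => match e with inl _ => ord0 | inr e => lift ord0 (layer e) end)
    (fun e => match e with
              | inl a => Tagged (fun n => node (H n)) (src (tagged a))
              | inr e => Tagged (fun n => node (H n)) (f (layer e, src e) e) end)
    (fun e => match e with
              | inl a => Tagged (fun n => node (H n)) (tgt (tagged a))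
              | inr e => Tagged (fun n => node (H n)) (g (layer e, tgt e) e) end)
    (fun u => lab (tagged u)).

Lemma expansion_res : res expansion = fun v => \sum_n res (H n) v.
Proof. by apply: functional_extensionality => v; rewrite /res sum_sigT. Qed.

Lemma expansion_connected :
  (forall n, connected (H n)) -> connected G -> connected expansion.
Proof.
move=> conH /connectedP conG; apply/connectedP.
pose inH n (k : node (H n)) : node expansion := Tagged (fun n => node (H n)) k.
have within (u v : node expansion) : tag u = tag v -> connect (@adj _ expansion) u v.
  case: u => n k; case: v => n' k' /= E; subst n'.
  have /connectedP conHn := conH n.
  apply: (connect_homo (h := inH n)) (conHn k k') => a b /existsP [e He].
  apply/existsP; exists (inl (Tagged (fun n => edge (H n)) e)).
  by rewrite /= !eq_Tagged.
have across (u v : node expansion) (e : edge G) : tag u = src e -> tag v = tgt e ->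
    connect (@adj _ expansion) u v /\ connect (@adj _ expansion) v u.
  move=> Eu Ev; pose w1 := inH _ (f (layer e, src e) e).
  pose w2 := inH _ (g (layer e, tgt e) e).
  have a12 : @adj _ expansion w1 w2 by apply/existsP; exists (inr e); rewrite !eqxx.
  have a21 : @adj _ expansion w2 w1 by apply/existsP; exists (inr e); rewrite !eqxx orbT.
  split.
    apply: connect_trans (within u w1 Eu) _.
    by apply: connect_trans (connect1 a12) (within w2 v (esym Ev)).
  apply: connect_trans (within v w2 Ev) _.
  by apply: connect_trans (connect1 a21) (within w1 u (esym Eu)).
move=> u v; move: (conG (tag u) (tag v)) => /connectP [l pl El].
elim: l u pl El => [|m l IH] u /=; first by move=> _ E; apply: within.
case/andP => /existsP [e /orP [/andP [/eqP s /eqP t] | /andP [/eqP s /eqP t]]] pl El.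
  apply: connect_trans (across u (inH _ (g (layer e, tgt e) e)) e (esym s) erefl).1 _.
  by apply: IH; rewrite /= t.
apply: connect_trans (across (inH _ (f (layer e, src e) e)) u e erefl (esym t)).2 _.
by apply: IH; rewrite /= s.
Qed.
End Expansion.

Lemma expansion_degrees (F : Type) (S : osg -> Prop) (b : nat * term F) (θ : subst F)
    (G : pgraph (size θ)) (H : node G -> pgraph 1)
    (f g : forall x : 'I_(size θ) * node G, edge G -> node (H x.2)) :
  (forall n, @is_sharing_graph F S [:: b] (H n)) ->
  (forall x k, \sum_(e | ((layer e == x.1) && (src e == x.2)) && (f x e == k)) 1
      = chi (lab k) (@Var F (nth (0, Var 0) θ x.1).1)) ->
  (forall x k, \sum_(e | ((layer e == x.1) && (tgt e == x.2)) && (g x e == k)) 1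
      = chi (lab k) (nth (0, Var 0) θ x.1).2) ->
  forall (i : 'I_(size (b :: θ))) (u : node (expansion f g)),
    outdeg i u = chi (lab u) (@Var F (nth (0, Var 0) (b :: θ) i).1) /\
    indeg i u = chi (lab u) (nth (0, Var 0) (b :: θ) i).2.
Proof.
move=> sgH fibre_f fibre_g i [n k].
rewrite /outdeg /indeg -!sum1dep_card !big_sumType /=.
case: (unliftP ord0 i) => [j ->|->].
  rewrite (negbTE (neq_lift _ _)) /= !big_pred0_eq !add0n /=.
  split.
    rewrite -(fibre_f (j, n) k); apply: eq_bigl => e /=.
    rewrite (inj_eq (@lift_inj _ ord0)) (Tagged_eqE _ (fun a => f (layer e, a) e)).
    by case: (eqVneq (layer e) j) => [->|] //=; rewrite andbA.
  rewrite -(fibre_g (j, n) k); apply: eq_bigl => e /=.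
  rewrite (inj_eq (@lift_inj _ ord0)) (Tagged_eqE _ (fun a => g (layer e, a) e)).
  by case: (eqVneq (layer e) j) => [->|] //=; rewrite andbA.
rewrite eqxx /=; case: (sgH n) => _ _ degH _; case: (degH ord0 k) => <- <-.
rewrite !big_pred0_eq !addn0 /outdeg /indeg -!sum1dep_card.
split; rewrite big_mkcond sum_sigT (bigD1 n) //= [X in _ + X]big1 ?addn0;
  try by move=> n' ne; apply: big1 => e _; rewrite Tagged_neq.
  by rewrite [RHS]big_mkcond; apply: eq_bigr => e _; rewrite eq_Tagged /= ord1 eqxx.
by rewrite [RHS]big_mkcond; apply: eq_bigr => e _; rewrite eq_Tagged /= ord1 eqxx.
Qed.

Lemma mgu_p_cons_expand (F : Type) (S : osg -> Prop) (b : nat * term F) (θ : subst F) B :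
  mgu_p (mgu_p S [:: b]) θ B -> mgu_p S (b :: θ) B.
Proof.
case=> G [[[n0 _] sgLab degG conG] resG].
have [H sgH] := fin_all_exists sgLab.
have inhabited_H n : exists k : node (H n), True.
  by case: (sgH n) => [[[k _] _ _ _] _]; exists k.
have fibre_src (x : 'I_(size θ) * node G) : exists fx : edge G -> node (H x.2),
    forall k, \sum_(e | ((layer e == x.1) && (src e == x.2)) && (fx e == k)) 1
       = chi (lab k) (@Var F (nth (0, Var 0) θ x.1).1).
  case: x => i n /=; have [k0 _] := inhabited_H n; apply: exists_fibration k0 _.
  case: (degG i n) => + _; rewrite /outdeg -sum1dep_card => ->.
  by case: (sgH n) => _ <-; rewrite /res chi_sum.
have fibre_tgt (x : 'I_(size θ) * node G) : exists gx : edge G -> node (H x.2),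
    forall k, \sum_(e | ((layer e == x.1) && (tgt e == x.2)) && (gx e == k)) 1
       = chi (lab k) (nth (0, Var 0) θ x.1).2.
  case: x => i n /=; have [k0 _] := inhabited_H n; apply: exists_fibration k0 _.
  case: (degG i n) => _; rewrite /indeg -sum1dep_card => ->.
  by case: (sgH n) => _ <-; rewrite /res chi_sum.
have [f fibre_f] := fin_all_exists fibre_src.
have [g fibre_g] := fin_all_exists fibre_tgt.
exists (expansion f g); split; first split.
- by have [k0 _] := inhabited_H n0; exists (Tagged (fun n => node (H n)) k0).
- by case=> n k /=; case: (sgH n) => [[_ labH _ _] _]; exact: labH.
- exact: expansion_degrees (fun n => (sgH n).1) fibre_f fibre_g.
- by apply: expansion_connected => // n; case: (sgH n) => [[]].
rewrite expansion_res -resG; apply: functional_extensionality => v.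
by rewrite /res; apply: eq_bigr => n _; case: (sgH n) => _ <-.
Qed.

(* Layer-0 components of a graph with layers 0..p, each represented by its
   root for the (symmetric) layer-0 adjacency. *)
Section Contraction.
Variables (p : nat) (G : pgraph p.+1).

Definition layer0_adj : rel (node G) := fun a b =>
  [exists e : edge G, (layer e == ord0) &&
     (((src e == a) && (tgt e == b)) || ((src e == b) && (tgt e == a)))].

Lemma layer0_adj_sym : connect_sym layer0_adj.
Proof.
by apply: sym_connect_sym => a b; apply/existsP/existsP => -[e He]; exists e;
  rewrite orbC.
Qed.

Local Notation root0 := (root layer0_adj).

Definition component : finType := {n : node G | root0 n == n}.

Definition comp_of (n : node G) : component :=
  exist _ (root0 n) (roots_root layer0_adj_sym n).

Lemma comp_of_val (c : component) : comp_of (val c) = c.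
Proof. by apply: val_inj; rewrite /= (eqP (valP c)). Qed.

Lemma root_layer0 (e : edge G) : layer e == ord0 -> root0 (src e) = root0 (tgt e).
Proof.
move=> e0; apply/(rootP layer0_adj_sym)/connect1/existsP; exists e.
by rewrite e0 !eqxx.
Qed.

Definition comp_nodes (c : component) : finType := {m : node G | root0 m == val c}.
Definition comp_edges (c : component) : finType :=
  {e : edge G | (layer e == ord0) && (root0 (src e) == val c)}.
Definition comp_root (c : component) : comp_nodes c := exist _ (val c) (valP c).

Definition comp_graph (c : component) : pgraph 1 :=
  @PGraph 1 (comp_nodes c) (comp_edges c) (fun _ => ord0)
    (fun e => insubd (comp_root c) (src (val e)))
    (fun e => insubd (comp_root c) (tgt (val e)))
    (fun m => lab (val m)).

Lemma comp_insubdE (c : component) (m : comp_nodes c) (x : node G) :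
  (root0 x == val c) && (insubd (comp_root c) x == m) = (x == val m).
Proof.
case cx: (root0 x == val c) => /=; first by rewrite -val_eqE val_insubd cx.
by apply/esym/negbTE/eqP => E; move: cx; rewrite E (valP m).
Qed.

(* The contraction of G: its nodes are the layer-0 components, labelled by
   their resultants, and its layer i holds the edges of layer i+1 of G. *)
Definition contraction : pgraph p :=
  @PGraph p component {x : 'I_p * edge G | layer x.2 == lift ord0 x.1}
    (fun x => (val x).1) (fun x => comp_of (src (val x).2))
    (fun x => comp_of (tgt (val x).2)) (fun c => res (comp_graph c)).

Lemma contraction_res : res contraction = res G.
Proof.
apply: functional_extensionality => v; rewrite /res /=.
rewrite [RHS](partition_big comp_of xpredT) //=; apply: eq_bigr => c _.
transitivity (\sum_(m | (root0 m == val c) && xpredT m) lab m v).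
  exact: (sum_sig_cond (fun m => root0 m == val c) xpredT (fun m => lab m v)).
by apply: eq_bigl => m; rewrite andbT -val_eqE.
Qed.

Lemma contraction_count (c : component) (ep : edge G -> node G) (i : 'I_p) :
  \sum_(x : {x : 'I_p * edge G | layer x.2 == lift ord0 x.1} |
          ((val x).1 == i) && (comp_of (ep (val x).2) == c)) 1 =
  \sum_(m : comp_nodes c) \sum_(e | (layer e == lift ord0 i) && (ep e == val m)) 1.
Proof.
rewrite (sum_sig_cond (fun x : 'I_p * edge G => layer x.2 == lift ord0 x.1)
   (fun x => (x.1 == i) && (comp_of (ep x.2) == c)) (fun _ => 1)).
rewrite big_mkcond -(pair_bigA _ (fun j e =>
   if (layer e == lift ord0 j) && ((j == i) && (comp_of (ep e) == c)) then 1 else 0)).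
rewrite (bigD1 i) //= [X in _ + X]big1 ?addn0; last first.
  by move=> j /negbTE ne; apply: big1 => e _; rewrite ne andbF.
rewrite eqxx -big_mkcond /=.
rewrite (partition_big (fun e => insubd (comp_root c) (ep e)) xpredT) //=.
apply: eq_bigr => m _; apply: eq_bigl => e.
by rewrite -andbA -val_eqE /= comp_insubdE.
Qed.

Lemma comp_graph_connected (c : component) : connected (comp_graph c).
Proof.
apply/connectedP => m m'.
have : connect layer0_adj (val m) (val m').
  by rewrite -(root_connect layer0_adj_sym) (eqP (valP m)) (eqP (valP m')).
case/connectP => l pl El.
suff walk a : root0 a == val c -> path layer0_adj a l ->
    connect (@adj _ (comp_graph c)) (insubd (comp_root c) a)
                                    (insubd (comp_root c) (last a l)).
  have insubdK (z : comp_nodes c) : insubd (comp_root c) (val z) = z.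
    by apply: val_inj; rewrite val_insubd (valP z).
  by have := walk (val m) (valP m) pl; rewrite -El !insubdK.
elim: l {El pl} a => [|b l IH] a ca //= /andP [/existsP [e /andP [e0 ends]] pl].
have same_root := root_layer0 e0.
have cb : root0 b == val c.
  by case/orP: ends => /andP [/eqP s /eqP t]; subst; rewrite ?same_root // -same_root.
apply: connect_trans (IH b cb pl); apply: connect1; apply/existsP.
have ce : (layer e == ord0) && (root0 (src e) == val c).
  by rewrite e0 /=; case/orP: ends => /andP [/eqP s _]; rewrite s.
exists (exist _ e ce : comp_edges c) => /=.
by case/orP: ends => /andP [/eqP -> /eqP ->]; rewrite !eqxx ?orbT.
Qed.

Lemma contraction_connected : connected G -> connected contraction.
Proof.
move=> /connectedP conG; apply/connectedP => c c'.
move/connectP: (conG (val c) (val c')) => [l pl El].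
rewrite -(comp_of_val c) -(comp_of_val c') El.
elim: l (val c) pl {El} => [|b l IH] a //= /andP [/existsP [e ends] pl].
apply: connect_trans (IH b pl).
case: (unliftP ord0 (layer e)) => [j ej|e0].
  apply: connect1; apply/existsP.
  have ej' : layer e == lift ord0 j by rewrite ej.
  exists (exist (fun x : 'I_p * edge G => layer x.2 == lift ord0 x.1) (j, e) ej') => /=.
  by case/orP: ends => /andP [/eqP -> /eqP ->]; rewrite !eqxx ?orbT.
suff -> : comp_of a = comp_of b by [].
apply: val_inj => /=; have := root_layer0 (introT eqP e0).
by case/orP: ends => /andP [/eqP -> /eqP ->].
Qed.
End Contraction.

Lemma comp_graph_sharing (F : Type) (S : osg -> Prop) (b : nat * term F) (θ : subst F)
    (G : pgraph (size θ).+1) (c : component G) :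
  @is_sharing_graph F S (b :: θ) G -> @is_sharing_graph F S [:: b] (comp_graph c).
Proof.
case=> _ labG degG _; split; [by exists (comp_root c) | by move=> m; apply: labG | | ].
- move=> i m; rewrite (ord1 i); case: (degG ord0 (val m)) => /= <- <-.
  rewrite /outdeg /indeg -!sum1dep_card /=.
  pose inc := fun e : edge G => (layer e == ord0) && (root (@layer0_adj _ G) (src e) == val c).
  rewrite (sum_sig_cond inc (fun e => insubd (comp_root c) (src e) == m) (fun _ => 1)).
  rewrite (sum_sig_cond inc (fun e => insubd (comp_root c) (tgt e) == m) (fun _ => 1)).
  split; apply: eq_bigl => e; rewrite /inc -andbA; first by rewrite comp_insubdE.
  case e0: (layer e == ord0) => //=.
  by rewrite (root_layer0 e0) comp_insubdE.
- exact: comp_graph_connected.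
Qed.

Lemma mgu_p_cons_contract (F : Type) (S : osg -> Prop) (b : nat * term F) (θ : subst F) B :
  mgu_p S (b :: θ) B -> mgu_p (mgu_p S [:: b]) θ B.
Proof.
case=> G [sgG resG]; have [[n0 _] _ degG conG] := sgG.
exists (contraction G); split; last by rewrite contraction_res.
split.
- by exists (comp_of n0).
- by move=> c; exists (comp_graph c); split => //; exact: comp_graph_sharing sgG.
- move=> i c; rewrite /outdeg /indeg -!sum1dep_card /=.
  rewrite (contraction_count c (fun e => src e) i) (contraction_count c (fun e => tgt e) i) /= !chi_sum.
  split; apply: eq_bigr => m _; have [out_m in_m] := degG (lift ord0 i) (val m).
    by move: out_m; rewrite /outdeg -sum1dep_card.
  by move: in_m; rewrite /indeg -sum1dep_card.
- exact: contraction_connected.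
Qed.

Lemma mgu_p_cons (F : Type) (S : osg -> Prop) (b : nat * term F) (θ : subst F) B :
  mgu_p S (b :: θ) B <-> mgu_p (mgu_p S [:: b]) θ B.
Proof. by split; [exact: mgu_p_cons_contract | exact: mgu_p_cons_expand]. Qed.

Theorem lemma1 (F : Type) (ar : F -> nat) (S : osg -> Prop)
  (x1 : nat) (t1 : term F) (theta : subst F) :
  (forall B, S B -> fin_supp B) ->
  wf_term ar t1 -> wf_subst ar theta ->
  idem_subst theta ->
  x1 \notin dom theta ->
  idem_subst ((x1, t1) :: theta) ->
  forall B : osg,
    mgu_p S ((x1, t1) :: theta) B <->
    mgu_p (mgu_p S [:: (x1, t1)]) theta B.
Proof. by move=> _ _ _ _ _ _ B; exact: mgu_p_cons. Qed.
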